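(* Let $a\in\mathbb{R}$ and let $(c(t))_{t\in\mathbb{R}}$ be a discontinuous bounded complex-valued cosine function (i.e. $c(0)=1$, $c(s+t)+c(s-t)=2c(s)c(t)$ for all $s,t\in\mathbb{R}$, $c$ bounded). Then $$\sup_{t\in\mathbb{R}}|\cos(at)-c(t)|=\limsup_{t\to0}|\cos(at)-c(t)|=2.$$ *)

From Stdlib Require Import Reals.
From Coquelicot Require Import Coquelicot.
Open Scope R_scope.

Definition is_cosine_function (c : R -> C) : Prop :=
  c 0 = RtoC 1 /\
  forall s t : R, Cplus (c (s + t)) (c (s - t)) = Cmult (Cmult (RtoC 2) (c s)) (c t).

Definition bounded_fun (c : R -> C) : Prop :=
  exists M : R, forall t : R, Cmod (c t) <= M.

Definition discontinuous (c : R -> C) : Prop :=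
  ~ (forall t : R, continuous c t).

Definition sup_all (f : R -> R) : Rbar :=
  Rbar_lub (fun y : Rbar => exists t : R, y = Finite (f t)).

Definition sup_punct (f : R -> R) (x0 d : R) : Rbar :=
  Rbar_lub (fun y : Rbar => exists t : R,
     0 < Rabs (t - x0) < d /\ y = Finite (f t)).

Definition limsup_at (f : R -> R) (x0 : R) : Rbar :=
  Rbar_glb (fun y : Rbar => exists d : R, 0 < d /\ y = sup_punct f x0 d).

(* A bounded complex cosine function is real with values in [-1, 1]: the sum
   S(z) = |z - 1| + |z + 1| is at least 2, equals 2 exactly on [-1, 1], and
   satisfies S(2 z^2 - 1) = S(z)^2 - 2, so along c(t), c(2t), c(4t), ... it
   would grow without bound unless S(c(t)) = 2.
   A real cosine function f that stays above -1 + eps on (-d, d) satisfies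
   f(t) >= cos(pi |t| / d) there, by a Dirichlet approximation of the angle
   of f(t / Q!); so f is continuous at 0, and then everywhere since
   (f(s+h) - f(s-h))^2 = 4 (1 - f(s)^2) (1 - f(h)^2).  Hence a discontinuous
   c takes values arbitrarily close to -1 arbitrarily close to 0, where
   cos(a t) is close to 1. *)

From Stdlib Require Import Reals Lra Lia ZArith Classical FinFun.
From Coquelicot Require Import Coquelicot.
Open Scope R_scope.

Definition foci_dist_sum (z : C) : R := Cmod (z - 1) + Cmod (z + 1).

Lemma foci_dist_sum_ge2 z : 2 <= foci_dist_sum z.
Proof.
  unfold foci_dist_sum.
  replace 2 with (Cmod ((z + 1) + - (z - 1))) by
    (replace ((z + 1) + - (z - 1))%C with (RtoC 2) by ring; rewrite Cmod_R, Rabs_pos_eq; lra).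
  rewrite <- (Cmod_opp (z - 1)), Rplus_comm.
  apply Cmod_triangle.
Qed.

Lemma foci_dist_sum_le z : foci_dist_sum z <= 2 * Cmod z + 2.
Proof.
  unfold foci_dist_sum, Cminus.
  assert (H1 := Cmod_triangle z (- (1))). assert (H2 := Cmod_triangle z 1).
  rewrite Cmod_opp, Cmod_1 in H1. rewrite Cmod_1 in H2. lra.
Qed.

Lemma Cmod_sub1_sqr z : Cmod (z - 1) ^ 2 = (Re z - 1) ^ 2 + Im z ^ 2.
Proof. rewrite Cmod2_alt. destruct z as [x y]. unfold Re, Im; simpl. ring. Qed.

Lemma Cmod_add1_sqr z : Cmod (z + 1) ^ 2 = (Re z + 1) ^ 2 + Im z ^ 2.
Proof. rewrite Cmod2_alt. destruct z as [x y]. unfold Re, Im; simpl. ring. Qed.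

(* |2z^2 - 2| = 2 |z - 1| |z + 1|, |2z^2| = 2 |z|^2, and by the parallelogram
   law |z - 1|^2 + |z + 1|^2 = 2 |z|^2 + 2. *)
Lemma foci_dist_sum_chebyshev z :
  foci_dist_sum (2 * z * z - 1) = foci_dist_sum z ^ 2 - 2.
Proof.
  unfold foci_dist_sum.
  replace (2 * z * z - 1 - 1)%C with (2 * (z - 1) * (z + 1))%C by ring.
  replace (2 * z * z - 1 + 1)%C with (2 * z * z)%C by ring.
  rewrite !Cmod_mult, Cmod_R, Rabs_pos_eq by lra.
  assert (Hz : Cmod z * Cmod z = Re z ^ 2 + Im z ^ 2) by (rewrite <- Cmod2_alt; ring).
  assert (Hm := Cmod_sub1_sqr z). assert (Hp := Cmod_add1_sqr z).
  nra.
Qed.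

Lemma foci_dist_sum_eq2 z :
  foci_dist_sum z = 2 -> z = RtoC (Re z) /\ -1 <= Re z <= 1.
Proof.
  unfold foci_dist_sum. intros Hsum.
  assert (Hm := Cmod_sub1_sqr z). assert (Hp := Cmod_add1_sqr z).
  assert (Hm0 := Cmod_ge_0 (z - 1)). assert (Hp0 := Cmod_ge_0 (z + 1)).
  assert (Hdiff : Cmod (z + 1) - Cmod (z - 1) = 2 * Re z).
  { assert ((Cmod (z + 1) - Cmod (z - 1)) * 2 = 4 * Re z) by (rewrite <- Hsum; nra). lra. }
  assert (Him : Im z = 0).
  { assert (Cmod (z - 1) = 1 - Re z) by lra. nra. }
  split; [|lra].
  destruct z as [x y]. unfold Im in Him; simpl in Him. subst y. reflexivity.
Qed.

Lemma sqr_sub2_orbit_bounded (x : nat -> R) :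
  (forall k, 2 <= x k) -> (forall k, x (S k) = x k ^ 2 - 2) ->
  (exists M, forall k, x k <= M) -> x 0%nat = 2.
Proof.
  intros Hge Hrec [M HM].
  assert (Hlin : forall k, (INR k + 1) * (x 0%nat - 2) <= x k - 2).
  { induction k as [|k IH]; [simpl; lra|].
    rewrite Hrec, S_INR.
    assert (Hk := pos_INR k). assert (Hx := Hge k). assert (Hx0 := Hge 0%nat).
    assert (4 * (x k - 2) <= x k ^ 2 - 4) by nra. nra. }
  apply Rle_antisym; [|apply Hge].
  apply Rnot_lt_le. intros Hlt.
  destruct (INR_unbounded ((M - 2) / (x 0%nat - 2))) as [k Hk].
  specialize (Hlin k). specialize (HM k).
  apply Rmult_gt_compat_r with (r := x 0%nat - 2) in Hk; [|lra].
  unfold Rdiv in Hk. rewrite Rmult_assoc, Rinv_l in Hk; lra.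
Qed.

Lemma cosine_function_double (c : R -> C) t :
  is_cosine_function c -> c (t + t) = (2 * c t * c t - 1)%C.
Proof.
  intros [H0 HD]. specialize (HD t t).
  rewrite Rminus_diag, H0 in HD. rewrite <- HD. ring.
Qed.

Lemma bounded_cosine_function_real (c : R -> C) :
  is_cosine_function c -> bounded_fun c ->
  forall t, c t = RtoC (Re (c t)) /\ -1 <= Re (c t) <= 1.
Proof.
  intros Hc [M HM] t. apply foci_dist_sum_eq2.
  rewrite <- (Rmult_1_r t). change 1 with (2 ^ 0).
  apply (sqr_sub2_orbit_bounded (fun k => foci_dist_sum (c (t * 2 ^ k)))).
  - intros k. apply foci_dist_sum_ge2.
  - intros k. simpl. replace (t * (2 * 2 ^ k)) with (t * 2 ^ k + t * 2 ^ k) by ring.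
    rewrite cosine_function_double by exact Hc. apply foci_dist_sum_chebyshev.
  - exists (2 * M + 2). intros k.
    assert (H := foci_dist_sum_le (c (t * 2 ^ k))). specialize (HM (t * 2 ^ k)). lra.
Qed.

Lemma cosine_function_Re (c : R -> C) :
  is_cosine_function c -> (forall t, c t = RtoC (Re (c t))) ->
  Re (c 0) = 1 /\ forall s t, Re (c (s + t)) + Re (c (s - t)) = 2 * Re (c s) * Re (c t).
Proof.
  intros [H0 HD] Hreal. rewrite H0. split; [reflexivity|].
  intros s t. specialize (HD s t). rewrite (Hreal s), (Hreal t) in HD.
  apply (f_equal Re) in HD. unfold Re in *. simpl in HD. rewrite HD. ring.
Qed.

Lemma cos_period_Z x (k : Z) : cos (x + 2 * IZR k * PI) = cos x.
Proof.
  destruct (Z.le_gt_cases 0 k) as [Hk|Hk].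
  - rewrite <- (Z2Nat.id k Hk), <- INR_IZR_INZ. apply cos_period.
  - replace (x + 2 * IZR k * PI) with (- (- x + 2 * IZR (- k) * PI))
      by (rewrite opp_IZR; ring).
    rewrite cos_neg, <- (Z2Nat.id (- k)) by lia.
    rewrite <- INR_IZR_INZ, cos_period. apply cos_neg.
Qed.

Lemma cos_Rabs x : cos (Rabs x) = cos x.
Proof. unfold Rabs. destruct (Rcase_abs x); [apply cos_neg | reflexivity]. Qed.

Lemma Rabs_sin_le_nonneg x : 0 <= x -> Rabs (sin x) <= x.
Proof.
  intros Hx. destruct (Rle_or_lt 1 x) as [H1|H1].
  - assert (H := SIN_bound x). apply Rabs_le. lra.
  - destruct (Req_dec x 0) as [->|Hx0]; [rewrite sin_0, Rabs_R0; lra|].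
    assert (H := sin_lt_x x ltac:(lra)).
    assert (0 <= sin x) by (apply sin_ge_0; generalize PI2_3_2; lra).
    rewrite Rabs_pos_eq; lra.
Qed.

Lemma Rabs_sin_le x : Rabs (sin x) <= Rabs x.
Proof.
  destruct (Rle_or_lt 0 x) as [Hx|Hx].
  - rewrite (Rabs_pos_eq x) by lra. now apply Rabs_sin_le_nonneg.
  - rewrite <- Rabs_Ropp, <- sin_neg, <- (Rabs_Ropp x), (Rabs_pos_eq (- x)) by lra.
    apply Rabs_sin_le_nonneg. lra.
Qed.

Lemma cos_ge_1_sub_sqr_div2 x : 1 - x ^ 2 / 2 <= cos x.
Proof.
  replace x with (2 * (x / 2)) at 2 by field. rewrite cos_2a_sin.
  assert (H := Rsqr_le_abs_1 _ _ (Rabs_sin_le (x / 2))).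
  unfold Rsqr in H. nra.
Qed.

Lemma nat_pigeonhole (Q : nat) (box : nat -> nat) :
  (forall j, box j < Q)%nat -> exists i j, (i < j <= Q)%nat /\ box i = box j.
Proof.
  intros Hbox. apply NNPP. intros Hnone.
  assert (Hinj : bInjective (S Q) box).
  { intros i j Hi Hj Heq.
    destruct (Nat.lt_total i j) as [Hij|[Hij|Hij]]; [| exact Hij |];
      exfalso; apply Hnone; eauto with arith. }
  assert (Hfun : bFun (S Q) box) by (intros j _; specialize (Hbox j); lia).
  destruct (proj1 (bInjective_bSurjective Hfun) Hinj Q) as [j [_ Hj]]; [lia|].
  specialize (Hbox j). lia.
Qed.

Lemma Int_part_eq_dist_lt1 x y : Int_part x = Int_part y -> Rabs (x - y) < 1.
Proof.
  intros Heq. destruct (base_Int_part x), (base_Int_part y).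
  rewrite Heq in *. apply Rabs_def1; lra.
Qed.

Lemma dirichlet_approximation (y : R) (Q : nat) : (1 <= Q)%nat ->
  exists (q : nat) (p : Z), (1 <= q <= Q)%nat /\ Rabs (INR q * y - IZR p) < / INR Q.
Proof.
  intros HQ. assert (HQr : 0 < INR Q) by (apply lt_0_INR; lia).
  set (cell j := Int_part (INR Q * frac_part (INR j * y))).
  assert (Hcell : forall j, (0 <= cell j < Z.of_nat Q)%Z).
  { intros j. destruct (base_fp (INR j * y)) as [H0 H1].
    destruct (base_Int_part (INR Q * frac_part (INR j * y))) as [Hl Hu].
    fold (cell j) in Hl, Hu. split.
    - cut (-1 < cell j)%Z; [lia|]. apply lt_IZR. nra.
    - apply lt_IZR. rewrite <- INR_IZR_INZ. nra. }
  destruct (nat_pigeonhole Q (fun j => Z.to_nat (cell j))) as [i [j [Hij Heq]]].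
  { intros j. specialize (Hcell j). lia. }
  assert (Hclose := Int_part_eq_dist_lt1 _ _
    (Z2Nat.inj _ _ (proj1 (Hcell j)) (proj1 (Hcell i)) (eq_sym Heq))).
  exists (j - i)%nat, (Int_part (INR j * y) - Int_part (INR i * y))%Z. split; [lia|].
  rewrite minus_INR, minus_IZR by lia.
  replace ((INR j - INR i) * y - (IZR (Int_part (INR j * y)) - IZR (Int_part (INR i * y))))
    with (frac_part (INR j * y) - frac_part (INR i * y)) by (unfold frac_part; ring).
  apply Rmult_lt_reg_l with (INR Q); [exact HQr|].
  rewrite Rinv_r, <- (Rabs_pos_eq (INR Q)), <- Rabs_mult by lra.
  rewrite Rmult_minus_distr_l. exact Hclose.
Qed.

Lemma divide_fact (q Q : nat) : (1 <= q <= Q)%nat -> Nat.divide q (Factorial.fact Q).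
Proof.
  induction Q as [|Q IH]; intros Hq; [lia|].
  rewrite fact_simpl.
  destruct (Nat.eq_dec q (S Q)) as [->|Hne].
  - apply Nat.divide_factor_l.
  - apply Nat.divide_mul_r, IH. lia.
Qed.

Lemma exists_nat_cos_2PI_div_gt eps : 0 < eps ->
  exists Q : nat, (1 <= Q)%nat /\ 2 * PI / INR Q <= PI /\ 1 - eps < cos (2 * PI / INR Q).
Proof.
  intros Heps. assert (HPI := PI_RGT_0).
  set (e1 := Rmin eps 1).
  assert (He1 : 0 < e1 <= 1 /\ e1 <= eps)
    by (unfold e1; split; [split|]; [apply Rmin_glb_lt | apply Rmin_r | apply Rmin_l]; lra).
  destruct (INR_unbounded (2 * PI / e1)) as [Q HQ].
  assert (HQ0 : 0 < INR Q) by (eapply Rlt_trans; [|exact HQ]; apply Rdiv_lt_0_compat; lra).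
  assert (Hth : 0 < 2 * PI / INR Q < e1).
  { split; [apply Rdiv_lt_0_compat; lra|].
    apply Rmult_lt_reg_r with (INR Q / e1); [apply Rdiv_lt_0_compat; lra|].
    replace (2 * PI / INR Q * (INR Q / e1)) with (2 * PI / e1) by (field; lra).
    replace (e1 * (INR Q / e1)) with (INR Q) by (field; lra). lra. }
  exists Q. split; [destruct Q; [simpl in HQ0; lra | lia]|].
  assert (Hcos := cos_ge_1_sub_sqr_div2 (2 * PI / INR Q)).
  split; [generalize PI2_3_2|]; nra.
Qed.

(* If |e| exceeded pi w / d, some multiple i e with i w < d would land in
   [pi - |e|, pi], where cos <= - cos e < -1 + eps. *)
Lemma small_angle_of_cos_multiples_ge (e w d eps : R) :
  0 < w -> 0 < d -> Rabs e <= PI -> 1 - eps < cos e ->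
  (forall i : nat, INR i * w < d -> -1 + eps <= cos (INR i * e)) ->
  Rabs e <= PI * w / d.
Proof.
  intros Hw Hd He_PI Hcos Hmul. assert (HPI := PI_RGT_0).
  apply Rnot_lt_le. intros Hlt.
  assert (HPw : PI * w < d * Rabs e).
  { apply Rmult_lt_compat_l with (r := d) in Hlt; [|exact Hd].
    replace (d * (PI * w / d)) with (PI * w) in Hlt by (field; lra). exact Hlt. }
  assert (He0 : 0 < Rabs e) by nra.
  destruct (nfloor_ex (PI / Rabs e)) as [i [Hi_le Hi_gt]]; [apply Rdiv_le_0_compat; lra|].
  assert (HPI_e : PI = PI / Rabs e * Rabs e) by (field; lra).
  set (x := PI / Rabs e) in *.
  assert (Hiw : INR i * w < d).
  { apply Rmult_lt_reg_r with (Rabs e); [exact He0|].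
    apply Rle_lt_trans with (PI * w); [|lra]. rewrite HPI_e.
    assert (0 <= (x - INR i) * (w * Rabs e)) by (apply Rmult_le_pos; nra). nra. }
  specialize (Hmul i Hiw).
  rewrite <- cos_Rabs, Rabs_mult, (Rabs_pos_eq (INR i)) in Hmul by apply pos_INR.
  assert (Hdecr : cos (INR i * Rabs e) <= cos (PI - Rabs e)) by (apply cos_decr_1; nra).
  rewrite Rtrigo_facts.cos_pi_minus, cos_Rabs in Hdecr. lra.
Qed.

Section RealCosineFunction.

Variable f : R -> R.
Hypothesis f_0 : f 0 = 1.
Hypothesis f_dalembert : forall s t, f (s + t) + f (s - t) = 2 * f s * f t.
Hypothesis f_range : forall t, -1 <= f t <= 1.

Lemma cosine_even t : f (- t) = f t.
Proof.
  assert (H := f_dalembert 0 t).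
  rewrite Rplus_0_l, Rminus_0_l, f_0 in H. lra.
Qed.

Lemma cosine_double t : f (t + t) = 2 * f t ^ 2 - 1.
Proof. assert (H := f_dalembert t t). rewrite Rminus_diag, f_0 in H. lra. Qed.

Lemma cosine_nat_mul u b : f u = cos b -> forall n : nat, f (INR n * u) = cos (INR n * b).
Proof.
  intros Hu.
  assert (Hpair : forall n : nat,
    f (INR n * u) = cos (INR n * b) /\ f (INR (S n) * u) = cos (INR (S n) * b)).
  { induction n as [|n [IH0 IH1]].
    - simpl. rewrite !Rmult_0_l, !Rmult_1_l, f_0, cos_0. auto.
    - split; [exact IH1|].
      assert (Hf := f_dalembert (INR (S n) * u) u).
      assert (Hcos := cos_plus (INR (S n) * b) b).
      assert (Hcos' := cos_minus (INR (S n) * b) b).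
      rewrite !S_INR in *.
      replace ((INR n + 1 + 1) * u) with ((INR n + 1) * u + u) by ring.
      replace ((INR n + 1 + 1) * b) with ((INR n + 1) * b + b) by ring.
      replace ((INR n + 1) * u - u) with (INR n * u) in Hf by ring.
      replace ((INR n + 1) * b - b) with (INR n * b) in Hcos' by ring.
      rewrite IH0, IH1, Hu in Hf. lra. }
  intros n. apply Hpair.
Qed.

(* From f(s+h) + f(s-h) = 2 f(s) f(h) and f(s+h) f(s-h) = (f(2s) + f(2h)) / 2. *)
Lemma cosine_sub_sqr s h :
  (f (s + h) - f (s - h)) ^ 2 = 4 * (1 - f s ^ 2) * (1 - f h ^ 2).
Proof.
  assert (Hsum := f_dalembert s h).
  assert (Hprod := f_dalembert (s + h) (s - h)).
  replace (s + h + (s - h)) with (s + s) in Hprod by ring.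
  replace (s + h - (s - h)) with (h + h) in Hprod by ring.
  rewrite !cosine_double in Hprod. nra.
Qed.

Lemma cosine_shift_le s h :
  Rabs (f (s + h) - f s) <= (1 - f h) + sqrt (2 * (1 - f h)).
Proof.
  assert (Hs := f_range s). assert (Hh := f_range h).
  replace (f (s + h) - f s) with (f s * (f h - 1) + (f (s + h) - f (s - h)) / 2)
    by (assert (H := f_dalembert s h); lra).
  eapply Rle_trans; [apply Rabs_triang|]. apply Rplus_le_compat.
  - rewrite Rabs_mult, Rabs_minus_sym, (Rabs_pos_eq (1 - f h)) by lra.
    assert (Hs1 : Rabs (f s) <= 1) by (apply Rabs_le; lra).
    assert (Hs0 := Rabs_pos (f s)). nra.
  - rewrite <- sqrt_Rsqr_abs. apply sqrt_le_1_alt.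
    unfold Rsqr. replace ((f (s + h) - f (s - h)) / 2 * ((f (s + h) - f (s - h)) / 2))
      with ((f (s + h) - f (s - h)) ^ 2 / 4) by field.
    rewrite cosine_sub_sqr.
    assert (HF : 0 <= 1 - f s ^ 2 <= 1) by nra.
    assert (HG : 0 <= 1 - f h ^ 2 <= 2 * (1 - f h)) by nra. nra.
Qed.

Section AwayFromMinusOne.

Variables d eps : R.
Hypothesis d_pos : 0 < d.
Hypothesis eps_pos : 0 < eps.
Hypothesis f_away : forall t, Rabs t < d -> -1 + eps <= f t.

(* With u = t / Q! and f(u) = cos b, Dirichlet gives q <= Q such that
   e = q b mod 2 pi is small; then f(n q u) = cos(n e), and t is one of these
   points because q divides Q!. *)
Lemma cosine_ge_cos_scaled_pos t : 0 < t <= d -> cos (PI * t / d) <= f t.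
Proof.
  intros [Ht Htd]. assert (HPI := PI_RGT_0).
  destruct (exists_nat_cos_2PI_div_gt eps eps_pos) as [Q [HQ [Hth_PI Hth_cos]]].
  set (m := Factorial.fact Q). assert (Hm : 0 < INR m) by apply INR_fact_lt_0.
  set (u := t / INR m). assert (Hu : 0 < u) by (apply Rdiv_lt_0_compat; lra).
  set (b := acos (f u)). assert (Hb : f u = cos b) by (unfold b; rewrite cos_acos; auto).
  destruct (dirichlet_approximation (b / (2 * PI)) Q HQ) as [q [p [Hq Hqp]]].
  set (e := INR q * b - 2 * PI * IZR p).
  assert (HQ0 : 0 < INR Q) by (apply lt_0_INR; lia).
  assert (Hth0 : 0 < 2 * PI / INR Q) by (apply Rdiv_lt_0_compat; lra).
  assert (He : Rabs e < 2 * PI / INR Q).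
  { replace e with (2 * PI * (INR q * (b / (2 * PI)) - IZR p)) by (unfold e; field; lra).
    rewrite Rabs_mult, (Rabs_pos_eq (2 * PI)) by lra.
    unfold Rdiv at 2. apply Rmult_lt_compat_l; lra. }
  assert (Hmul : forall n : nat, f (INR n * (INR q * u)) = cos (INR n * e)).
  { intros n. replace (INR n * (INR q * u)) with (INR (n * q) * u) by (rewrite mult_INR; ring).
    rewrite (cosine_nat_mul u b Hb), <- (cos_period_Z (INR n * e) (Z.of_nat n * p)).
    f_equal. unfold e. rewrite mult_INR, mult_IZR, <- INR_IZR_INZ. ring. }
  assert (Hq0 : 0 < INR q) by (apply lt_0_INR; lia).
  assert (Hsmall : Rabs e <= PI * (INR q * u) / d).
  { apply small_angle_of_cos_multiples_ge with eps; try lra; [nra| |].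
    - rewrite <- cos_Rabs. eapply Rlt_le_trans; [exact Hth_cos|].
      apply cos_decr_1; generalize (Rabs_pos e); lra.
    - intros i Hi. rewrite <- Hmul. apply f_away.
      rewrite Rabs_pos_eq; [exact Hi|]. apply Rmult_le_pos; [apply pos_INR | nra]. }
  destruct (divide_fact q Q Hq) as [k Hk].
  assert (Htk : t = INR k * (INR q * u)).
  { assert (Hkq : INR k * INR q <> 0) by (rewrite <- mult_INR, <- Hk; fold m; lra).
    unfold u, m. rewrite Hk, mult_INR. field.
    split; intros H0; apply Hkq; rewrite H0; ring. }
  assert (Hk0 := pos_INR k). assert (He0 := Rabs_pos e).
  assert (Hangle : INR k * Rabs e <= PI * t / d).
  { replace (PI * t / d) with (INR k * (PI * (INR q * u) / d)) by (rewrite Htk; field; lra).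
    apply Rmult_le_compat_l; lra. }
  assert (Ht_PI : PI * t / d <= PI).
  { apply Rmult_le_reg_r with d; [lra|]. unfold Rdiv. rewrite Rmult_assoc, Rinv_l; nra. }
  assert (0 <= PI * t / d) by (apply Rdiv_le_0_compat; nra).
  rewrite Htk at 2.
  rewrite Hmul, <- (cos_Rabs (INR k * e)), Rabs_mult, (Rabs_pos_eq (INR k)) by lra.
  apply cos_decr_1; nra.
Qed.

Lemma cosine_ge_cos_scaled t : Rabs t <= d -> cos (PI * Rabs t / d) <= f t.
Proof.
  intros Ht. destruct (Rtotal_order t 0) as [Hneg|[->|Hpos]].
  - rewrite <- cosine_even, Rabs_left by lra.
    apply cosine_ge_cos_scaled_pos. rewrite Rabs_left in Ht; lra.
  - rewrite f_0. apply COS_bound.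
  - rewrite Rabs_pos_eq by lra. apply cosine_ge_cos_scaled_pos.
    rewrite Rabs_pos_eq in Ht; lra.
Qed.

Lemma cosine_modulus s h : Rabs h <= d ->
  Rabs (f (s + h) - f s) <= (PI * Rabs h / d) ^ 2 / 2 + PI * Rabs h / d.
Proof.
  intros Hh. set (x := PI * Rabs h / d).
  assert (Hx : 0 <= x)
    by (unfold x; apply Rdiv_le_0_compat; [generalize (Rabs_pos h) PI_RGT_0; nra | lra]).
  assert (Hlow : 1 - f h <= x ^ 2 / 2).
  { generalize (cosine_ge_cos_scaled h Hh) (cos_ge_1_sub_sqr_div2 x). fold x. lra. }
  eapply Rle_trans; [apply cosine_shift_le|]. apply Rplus_le_compat; [exact Hlow|].
  rewrite <- (sqrt_pow2 x Hx). apply sqrt_le_1_alt. lra.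
Qed.

Lemma cosine_continuous_of_bounded_away s : continuous f s.
Proof.
  apply continuity_pt_filterlim, continuity_pt_locally. intros eta.
  assert (HPI := PI_RGT_0).
  set (r := Rmin 1 (eta / 2)).
  assert (Hr : 0 < r <= 1 /\ r <= eta / 2)
    by (unfold r; split; [split|]; [apply Rmin_glb_lt | apply Rmin_l | apply Rmin_r];
        generalize (cond_pos eta); lra).
  assert (Hrho : 0 < Rmin d (r * d / PI))
    by (apply Rmin_glb_lt; [lra | apply Rdiv_lt_0_compat; nra]).
  exists (mkposreal _ Hrho). intros y Hy. change R in y.
  change (Rabs (y - s) < Rmin d (r * d / PI)) in Hy.
  assert (Hyd : Rabs (y - s) <= d) by (generalize (Rmin_l d (r * d / PI)); lra).
  assert (Hyr : PI * Rabs (y - s) / d < r).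
  { apply Rmult_lt_reg_r with (d / PI); [apply Rdiv_lt_0_compat; lra|].
    replace (PI * Rabs (y - s) / d * (d / PI)) with (Rabs (y - s)) by (field; lra).
    replace (r * (d / PI)) with (r * d / PI) by (field; lra).
    generalize (Rmin_r d (r * d / PI)); lra. }
  assert (Hmod := cosine_modulus s (y - s) Hyd).
  replace (s + (y - s)) with y in Hmod by ring.
  assert (0 <= PI * Rabs (y - s) / d)
    by (apply Rdiv_le_0_compat; [generalize (Rabs_pos (y - s)); nra | lra]).
  generalize (cond_pos eta). nra.
Qed.

End AwayFromMinusOne.

Lemma cosine_near_minus1_of_discontinuous :
  ~ (forall s, continuous f s) ->
  forall d eps, 0 < d -> 0 < eps -> exists t, 0 < Rabs t < d /\ f t < -1 + eps.
Proof.
  intros Hdisc d eps Hd Heps. apply NNPP. intros Hnone.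
  apply Hdisc, (cosine_continuous_of_bounded_away d (Rmin eps 1) Hd);
    [apply Rmin_glb_lt; lra|].
  intros t Ht. destruct (Req_dec t 0) as [->|Ht0].
  - rewrite f_0. generalize (Rmin_r eps 1). lra.
  - apply Rnot_lt_le. intros Hlt. apply Hnone. exists t.
    split; [split; [apply Rabs_pos_lt|]; assumption|].
    generalize (Rmin_l eps 1). lra.
Qed.

End RealCosineFunction.

Lemma Rbar_lub_eq_of_approx (E : Rbar -> Prop) (L : R) :
  (forall y, E y -> exists r, y = Finite r /\ r <= L) ->
  (forall eps, 0 < eps -> exists r, E (Finite r) /\ L - eps < r) ->
  Rbar_lub E = Finite L.
Proof.
  intros Hub Happrox. apply Rbar_is_lub_unique. split.
  - intros y Hy. destruct (Hub y Hy) as [r [-> Hr]]. exact Hr.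
  - intros [b| |] Hb; simpl; [| trivial |].
    + apply Rnot_lt_le. intros Hlt.
      destruct (Happrox (L - b)) as [r [Hr Hlr]]; [lra|].
      specialize (Hb _ Hr). simpl in Hb. lra.
    + destruct (Happrox 1) as [r [Hr _]]; [lra|]. exact (Hb _ Hr).
Qed.

Lemma sup_all_limsup_at_eq (g : R -> R) (x0 L : R) :
  (forall t, g t <= L) ->
  (forall d eps, 0 < d -> 0 < eps -> exists t, 0 < Rabs (t - x0) < d /\ L - eps < g t) ->
  sup_all g = Finite L /\ limsup_at g x0 = Finite L.
Proof.
  intros Hub Hnear.
  assert (Hpunct : forall d, 0 < d -> sup_punct g x0 d = Finite L).
  { intros d Hd. apply Rbar_lub_eq_of_approx.
    - intros y [t [_ ->]]. eauto.
    - intros eps Heps. destruct (Hnear d eps Hd Heps) as [t [Ht Hgt]]. eauto. }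
  split.
  - apply Rbar_lub_eq_of_approx.
    + intros y [t ->]. eauto.
    + intros eps Heps. destruct (Hnear 1 eps ltac:(lra) Heps) as [t [_ Hgt]]. eauto.
  - apply Rbar_is_glb_unique. split.
    + intros y [d [Hd ->]]. rewrite (Hpunct d Hd). apply Rle_refl.
    + intros b Hb. apply Hb. exists 1. split; [lra|]. symmetry. apply Hpunct. lra.
Qed.

Lemma cos_mul_near_1 a eps : 0 < eps ->
  exists delta, 0 < delta /\ forall t, Rabs t < delta -> 1 - eps < cos (a * t).
Proof.
  intros Heps. assert (Ha := Rabs_pos a).
  set (r := Rmin eps 1).
  assert (Hr : 0 < r <= 1 /\ r <= eps)
    by (unfold r; split; [split|]; [apply Rmin_glb_lt | apply Rmin_r | apply Rmin_l]; lra).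
  exists (r / (Rabs a + 1)). split; [apply Rdiv_lt_0_compat; lra|].
  intros t Ht.
  assert (Hat : Rabs (a * t) < r).
  { rewrite Rabs_mult.
    apply Rle_lt_trans with ((Rabs a + 1) * Rabs t); [generalize (Rabs_pos t); nra|].
    apply Rmult_lt_reg_r with (/ (Rabs a + 1)); [apply Rinv_0_lt_compat; lra|].
    replace ((Rabs a + 1) * Rabs t * / (Rabs a + 1)) with (Rabs t) by (field; lra). exact Ht. }
  assert (Hcos := cos_ge_1_sub_sqr_div2 (a * t)).
  rewrite <- pow2_abs in Hcos. assert (H0 := Rabs_pos (a * t)). nra.
Qed.

Lemma continuous_RtoC (f : R -> R) x :
  continuous f x -> continuous (fun t => RtoC (f t)) x.
Proof.
  intros Hf.
  apply (continuous_comp_2 f (fun _ => 0) (fun a b => (a, b) : C));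
    [exact Hf | apply continuous_const |].
  intros P [eps HP]. exists eps. intros [a b] Hab. exact (HP _ Hab).
Qed.

Theorem corollary3p2 (a : R) (c : R -> C) :
  is_cosine_function c -> bounded_fun c -> discontinuous c ->
  sup_all (fun t => Cmod (Cminus (RtoC (cos (a * t))) (c t))) = Finite 2 /\
  limsup_at (fun t => Cmod (Cminus (RtoC (cos (a * t))) (c t))) 0 = Finite 2.
Proof.
  intros Hc Hbd Hdisc.
  set (f t := Re (c t)).
  assert (Hreal := bounded_cosine_function_real c Hc Hbd).
  assert (Hcf : forall t, c t = RtoC (f t)) by (intros t; apply Hreal).
  destruct (cosine_function_Re c Hc Hcf) as [Hf0 HfD].
  assert (Hfrange : forall t, -1 <= f t <= 1) by (intros t; apply Hreal).
  assert (Hdisc_f : ~ (forall s, continuous f s)).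
  { intros Hcont. apply Hdisc. intros s.
    apply continuous_ext with (fun t => RtoC (f t)); [intros t; now rewrite Hcf|].
    apply continuous_RtoC, Hcont. }
  assert (Hdist : forall t, Cmod (RtoC (cos (a * t)) - c t) = Rabs (cos (a * t) - f t)).
  { intros t. now rewrite Hcf, <- RtoC_minus, Cmod_R. }
  apply sup_all_limsup_at_eq.
  - intros t. rewrite Hdist. generalize (COS_bound (a * t)) (Hfrange t). intros.
    apply Rabs_le. lra.
  - intros d eps Hd Heps.
    destruct (cos_mul_near_1 a (eps / 2)) as [delta [Hdelta Hcos]]; [lra|].
    destruct (cosine_near_minus1_of_discontinuous f Hf0 HfD Hfrange Hdisc_f
                (Rmin d delta) (eps / 2)) as [t [Ht Hft]]; [apply Rmin_glb_lt; lra | lra |].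
    exists t. rewrite Rminus_0_r, Hdist. split; [split; [|generalize (Rmin_l d delta)]; lra|].
    specialize (Hcos t ltac:(generalize (Rmin_r d delta); lra)).
    eapply Rlt_le_trans; [|apply Rle_abs]. lra.
Qed.
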